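(* Over pairs of integers $n,m\ge 2$ with $n,m\to\infty$, \[ \liminf_{n,m\to\infty}\frac{\gamma_{2t}(K_n\Box K_m)}{\min\{n,m\}}=\frac32\qquad\text{and}\qquad\limsup_{n,m\to\infty}\frac{\gamma_{2t}(K_n\Box K_m)}{\min\{n,m\}}=2. \] Furthermore, for every real number $\alpha$ with $\frac32\le\alpha\le 2$ there exists a sequence of pairs of integers $(n_k,m_k)$, $k=1,2,\dots$, with $n_k,m_k\ge 2$, such that \[ \lim_{k\to\infty}\frac{\gamma_{2t}(K_{n_k}\Box K_{m_k})}{\min\{n_k,m_k\}}=\alpha. \]
   Context: For a graph $G=(V,E)$, a set $S\subseteq V$ is a total $2$-dominating set if every vertex of $V$ (including those in $S$) is adjacent to at least $2$ vertices of $S$; $\gamma_{2t}(G)$ is the minimum cardinality of such a set. $G\Box H$ denotes the Cartesian product: vertex set $V(G)\times V(H)$, with $(u_1,v_1)\sim(u_2,v_2)$ iff either $u_1=u_2$ and $v_1\sim v_2$, or $v_1=v_2$ and $u_1\sim u_2$. $K_n$ is the complete graph on $n$ vertices. *)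

From Stdlib Require Import Reals.
From mathcomp Require Import all_boot.

Set Implicit Arguments.
Unset Strict Implicit.
Unset Printing Implicit Defensive.

Definition KK_adj (n m : nat) : rel ('I_n * 'I_m) :=
  fun x y => ((x.1 == y.1) && (x.2 != y.2)) || ((x.2 == y.2) && (x.1 != y.1)).

Definition total2dom (T : finType) (e : rel T) (S : {set T}) : bool :=
  [forall v : T, 2 <= #|[set u in S | e v u]|].

(* gamma_{2t}: minimum cardinality of a total 2-dominating set
   (default #|T| if none exists; for K_n [] K_m with n,m >= 2 the whole
   vertex set is total 2-dominating, so the default is never the value). *)
Definition gamma2t (T : finType) (e : rel T) : nat :=
  \big[minn/#|T|]_(S : {set T} | total2dom e S) #|S|.

Definition gamma2t_KK (n m : nat) : nat := gamma2t (@KK_adj n m).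

Definition ratio (n m : nat) : R := Rdiv (INR (gamma2t_KK n m)) (INR (minn n m)).

Definition liminf2_is (f : nat -> nat -> R) (l : R) : Prop :=
  (forall eps : R, Rlt R0 eps ->
     exists N : nat, forall n m : nat, le N n -> le N m ->
       Rlt (Rminus l eps) (f n m)) /\
  (forall eps : R, Rlt R0 eps -> forall N : nat,
     exists n m : nat, le N n /\ le N m /\ Rlt (f n m) (Rplus l eps)).

Definition limsup2_is (f : nat -> nat -> R) (l : R) : Prop :=
  (forall eps : R, Rlt R0 eps ->
     exists N : nat, forall n m : nat, le N n -> le N m ->
       Rlt (f n m) (Rplus l eps)) /\
  (forall eps : R, Rlt R0 eps -> forall N : nat,
     exists n m : nat, le N n /\ le N m /\ Rlt (Rminus l eps) (f n m)).

From Stdlib Require Import Reals Lra Lia ZArith.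
From mathcomp Require Import all_boot zify.

Set Implicit Arguments.
Unset Strict Implicit.
Unset Printing Implicit Defensive.

(* Write r_i and c_j for the numbers of points of S in row i and column j.
   A vertex (i, j) has r_i + c_j - 2[(i, j) \in S] neighbours in S, so S is
   total 2-dominating iff r_i + c_j >= 2 + 2[(i, j) \in S] everywhere.
   If a row misses S, every column carries two points of S (and symmetrically);
   otherwise, counting apart the points alone in their row (their column then
   carries three points) and those alone in their column gives
   3(n + m) <= 4|S|.  Hence 3 min(n, m) <= 2 gamma_2t.  A diagonal together with
   a cyclically shifted diagonal gives gamma_2t <= 2 min(n, m).  On
   K_(x+3y) [] K_(3x+y) with y <= x <= 3y, x horizontal and y vertical disjoint
   triples form a total 2-dominating set of size 3(x + y), matching the lower
   bound; the ratio 3(x + y)/(x + 3y) equals 3/2 for x = y, 2 for x = 3y, and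
   tends to any value in between as x/y converges. *)

Section RowsColumns.

Variables n m : nat.
Implicit Types (S : {set 'I_n * 'I_m}) (i : 'I_n) (j : 'I_m).

Definition row_set S i := [set x in S | x.1 == i].
Definition col_set S j := [set x in S | x.2 == j].

Lemma card_rows S : #|S| = \sum_i #|row_set S i|.
Proof.
rewrite -sum1_card (partition_big (fun x => x.1) xpredT) //=.
by apply: eq_bigr => i _; rewrite -sum1_card; apply: eq_bigl => x; rewrite !inE.
Qed.

Lemma card_cols S : #|S| = \sum_j #|col_set S j|.
Proof.
rewrite -sum1_card (partition_big (fun x => x.2) xpredT) //=.
by apply: eq_bigr => j _; rewrite -sum1_card; apply: eq_bigl => x; rewrite !inE.
Qed.

Lemma card_row_setE S i : #|row_set S i| = #|[set j | (i, j) \in S]|.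
Proof.
have pair_inj : injective (pair i : 'I_m -> 'I_n * 'I_m) by move=> j1 j2 [].
rewrite -(card_imset [set j | (i, j) \in S] pair_inj).
apply: eq_card => -[a b]; rewrite !inE /=.
apply/andP/imsetP => [[ab /eqP ai] | [j]]; first by exists b; rewrite ?inE -?ai.
by rewrite inE => ij [-> ->].
Qed.

Lemma card_col_setE S j : #|col_set S j| = #|[set i | (i, j) \in S]|.
Proof.
have pair_inj : injective (pair^~ j : 'I_n -> 'I_n * 'I_m) by move=> i1 i2 [].
rewrite -(card_imset [set i | (i, j) \in S] pair_inj).
apply: eq_card => -[a b]; rewrite !inE /=.
apply/andP/imsetP => [[ab /eqP bj] | [i]]; first by exists a; rewrite ?inE -?bj.
by rewrite inE => ij [-> ->].
Qed.

End RowsColumns.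

Lemma card_ord_seq k (A : {set 'I_k}) (L : seq nat) :
  uniq L -> all (fun a => a < k) L -> (forall j : 'I_k, (j \in A) = (val j \in L)) ->
  #|A| = size L.
Proof.
move=> uL /allP Lk AL; rewrite cardE -(size_map val); apply: perm_size.
apply: uniq_perm => //; first by rewrite map_inj_uniq ?enum_uniq //; apply: val_inj.
move=> a; apply/mapP/idP => [[j] | aL]; first by rewrite mem_enum AL => ? ->.
by exists (Ordinal (Lk a aL)); rewrite ?mem_enum ?AL.
Qed.

Lemma card_KK_nbrs n m (S : {set 'I_n * 'I_m}) v :
  #|[set u in S | KK_adj v u]| + 2 * (v \in S) = #|row_set S v.1| + #|col_set S v.2|.
Proof.
have -> : [set u in S | KK_adj v u] = (row_set S v.1 :\ v) :|: (col_set S v.2 :\ v).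
  apply/setP => -[a b]; case: v => c d; rewrite !inE /KK_adj /= !xpair_eqE.
  rewrite [c == a]eq_sym [d == b]eq_sym.
  by case: (a == c); case: (b == d); case: ((a, b) \in S).
have disj : (row_set S v.1 :\ v) :&: (col_set S v.2 :\ v) = set0.
  apply/setP => -[a b]; case: v => c d; rewrite !inE /= !xpair_eqE.
  by case: (a == c); case: (b == d); rewrite ?andbF.
have := cardsUI (row_set S v.1 :\ v) (col_set S v.2 :\ v); rewrite disj cards0 addn0 => ->.
rewrite (cardsD1 v (row_set S v.1)) (cardsD1 v (col_set S v.2)) !inE !eqxx !andbT.
by move: (v \in S) (#|_ :\ v|) (#|_ :\ v|) => [] a b /=; lia.
Qed.

Lemma total2dom_KKP n m (S : {set 'I_n * 'I_m}) :
  reflect (forall v, 2 + 2 * (v \in S) <= #|row_set S v.1| + #|col_set S v.2|)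
          (total2dom (@KK_adj n m) S).
Proof.
apply: (iffP forallP) => S2 v; have := S2 v; rewrite -card_KK_nbrs;
  by case: (v \in S); rewrite /= ?leq_add2r.
Qed.

Lemma bigmin_le_mem (I : eqType) (r : seq I) (P : pred I) (F : I -> nat) d i0 :
  i0 \in r -> P i0 -> \big[minn/d]_(i <- r | P i) F i <= F i0.
Proof.
elim: r => // a r IHr; rewrite in_cons big_cons => /orP[/eqP <- -> | r_i0 P_i0].
  exact: geq_minl.
by case: (P a); [apply: leq_trans (geq_minr _ _) _ |]; apply: IHr.
Qed.

Lemma gamma2t_le_card (T : finType) (e : rel T) (S : {set T}) :
  total2dom e S -> gamma2t e <= #|S|.
Proof. exact: bigmin_le_mem (mem_index_enum S). Qed.

Lemma gamma2t_ind (T : finType) (e : rel T) (P : nat -> Prop) :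
  P #|T| -> (forall S, total2dom e S -> P #|S|) -> P (gamma2t e).
Proof.
move=> PT PS; apply: (big_ind P) => // a b Pa Pb.
by rewrite /minn; case: ltnP.
Qed.

Section LowerBound.

Variables (n m : nat) (S : {set 'I_n * 'I_m}).
Hypothesis S2dom : total2dom (@KK_adj n m) S.

Let lines_sum v : 2 + 2 * (v \in S) <= #|row_set S v.1| + #|col_set S v.2|.
Proof. by move: v; apply/total2dom_KKP. Qed.

Lemma card_ge_empty_row i : row_set S i = set0 -> 2 * m <= #|S|.
Proof.
move=> row0; have -> : 2 * m = \sum_(j : 'I_m) 2 by rewrite sum_nat_const card_ord mulnC.
rewrite card_cols; apply: leq_sum => j _.
have := lines_sum (i, j); rewrite /= row0 cards0 add0n.
case ijS: ((i, j) \in S); last by rewrite muln0.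
have : (i, j) \in row_set S i by rewrite !inE ijS eqxx.
by rewrite row0 inE.
Qed.

Lemma card_ge_empty_col j : col_set S j = set0 -> 2 * n <= #|S|.
Proof.
move=> col0; have -> : 2 * n = \sum_(i : 'I_n) 2 by rewrite sum_nat_const card_ord mulnC.
rewrite card_rows; apply: leq_sum => i _.
have := lines_sum (i, j); rewrite /= col0 cards0 addn0.
case ijS: ((i, j) \in S); last by rewrite muln0.
have : (i, j) \in col_set S j by rewrite !inE ijS eqxx.
by rewrite col0 inE.
Qed.

Let lone_in_row := [set x in S | #|row_set S x.1| == 1].
Let lone_in_col := [set x in S | #|col_set S x.2| == 1].

Lemma card_lone_le : #|lone_in_row| + #|lone_in_col| <= #|S|.
Proof.
have disj : lone_in_row :&: lone_in_col = set0.
  apply/setP => x; rewrite !inE; apply/negP => /andP[/andP[xS /eqP r1] /andP[_ /eqP c1]].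
  by have := lines_sum x; rewrite xS r1 c1.
rewrite -cardsUI disj cards0 addn0; apply: subset_leq_card.
by apply/subsetP => x; rewrite !inE => /orP[] /andP[].
Qed.

Lemma row_lone_bound i : 0 < #|row_set S i| ->
  6 + #|row_set lone_in_col i| <= 3 * #|row_set S i| + 3 * #|row_set lone_in_row i|.
Proof.
move=> row_gt0.
have col_le : #|row_set lone_in_col i| <= #|row_set S i|.
  by apply: subset_leq_card; apply/subsetP => x; rewrite !inE => /andP[/andP[-> _] ->].
have col0 : #|row_set S i| <= 2 -> #|row_set lone_in_col i| = 0.
  move=> row_le2; apply: eq_card0 => x; rewrite !inE.
  apply/negP => /andP[/andP[xS /eqP c1] /eqP xi].
  by have := lines_sum x; rewrite xS c1 xi; lia.
have row1 : #|row_set S i| = 1 -> 1 <= #|row_set lone_in_row i|.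
  move=> r1; rewrite -r1; apply: subset_leq_card; apply/subsetP => x.
  by rewrite !inE => /andP[xS /eqP xi]; rewrite xS xi r1 !eqxx.
lia.
Qed.

Lemma col_lone_bound j : 0 < #|col_set S j| ->
  6 + #|col_set lone_in_row j| <= 3 * #|col_set S j| + 3 * #|col_set lone_in_col j|.
Proof.
move=> col_gt0.
have row_le : #|col_set lone_in_row j| <= #|col_set S j|.
  by apply: subset_leq_card; apply/subsetP => x; rewrite !inE => /andP[/andP[-> _] ->].
have row0 : #|col_set S j| <= 2 -> #|col_set lone_in_row j| = 0.
  move=> col_le2; apply: eq_card0 => x; rewrite !inE.
  apply/negP => /andP[/andP[xS /eqP r1] /eqP xj].
  by have := lines_sum x; rewrite xS r1 xj; lia.
have col1 : #|col_set S j| = 1 -> 1 <= #|col_set lone_in_col j|.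
  move=> c1; rewrite -c1; apply: subset_leq_card; apply/subsetP => x.
  by rewrite !inE => /andP[xS /eqP xj]; rewrite xS xj c1 !eqxx.
lia.
Qed.

Lemma card_ge_nonempty_lines :
  (forall i, 0 < #|row_set S i|) -> (forall j, 0 < #|col_set S j|) ->
  3 * (n + m) <= 4 * #|S|.
Proof.
move=> rows_gt0 cols_gt0.
have rows : 6 * n + #|lone_in_col| <= 3 * #|S| + 3 * #|lone_in_row|.
  have : \sum_i (6 + #|row_set lone_in_col i|) <=
         \sum_i (3 * #|row_set S i| + 3 * #|row_set lone_in_row i|).
    by apply: leq_sum => i _; apply: row_lone_bound.
  by rewrite [X in X <= _]big_split [X in _ <= X]big_split -!big_distrr /=
     sum_nat_const card_ord -!card_rows mulnC.
have cols : 6 * m + #|lone_in_row| <= 3 * #|S| + 3 * #|lone_in_col|.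
  have : \sum_j (6 + #|col_set lone_in_row j|) <=
         \sum_j (3 * #|col_set S j| + 3 * #|col_set lone_in_col j|).
    by apply: leq_sum => j _; apply: col_lone_bound.
  by rewrite [X in X <= _]big_split [X in _ <= X]big_split -!big_distrr /=
     sum_nat_const card_ord -!card_cols mulnC.
have := card_lone_le; lia.
Qed.

Lemma card_total2dom_KK_cases : 2 * minn n m <= #|S| \/ 3 * (n + m) <= 4 * #|S|.
Proof.
case: (pickP (fun i => #|row_set S i| == 0)) => [i /eqP/cards0_eq row0 | rows_gt0].
  by left; apply: leq_trans (card_ge_empty_row row0); rewrite leq_mul2l geq_minr orbT.
case: (pickP (fun j => #|col_set S j| == 0)) => [j /eqP/cards0_eq col0 | cols_gt0].
  by left; apply: leq_trans (card_ge_empty_col col0); rewrite leq_mul2l geq_minl orbT.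
by right; apply: card_ge_nonempty_lines => [i | j]; rewrite lt0n ?rows_gt0 ?cols_gt0.
Qed.

End LowerBound.

Lemma gamma2t_KK_lower n m : 2 <= n -> 2 <= m -> 3 * minn n m <= 2 * gamma2t_KK n m.
Proof.
move=> n_ge2 m_ge2; elim/gamma2t_ind: (gamma2t_KK n m) => [|S /card_total2dom_KK_cases]; last first.
  by move: #|S| => s; lia.
rewrite card_prod !card_ord; nia.
Qed.

Lemma sum_ord_step n k a b : k <= n ->
  \sum_(i < n) (if i < k then a else b) = a * k + b * (n - k).
Proof.
move=> k_le_n; rewrite -(big_mkord xpredT (fun i => if i < k then a else b)).
rewrite (@big_cat_nat _ _ _ k 0 n _ _ (leq0n k) k_le_n) /=.
rewrite (@eq_big_nat _ _ _ 0 k _ (fun _ => a)); last by move=> i /andP[_ ->].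
rewrite (@eq_big_nat _ _ _ k n _ (fun _ => b)); last by move=> i /andP[/leq_gtF ->].
by rewrite !sum_nat_const_nat subn0 mulnC [b * _]mulnC.
Qed.

Lemma modn_succ i k : i < k -> i.+1 %% k = if i.+1 < k then i.+1 else 0.
Proof.
move=> i_lt_k; case: ltnP => [/modn_small // | k_le].
by rewrite (@anti_leq i.+1 k) ?i_lt_k ?modnn.
Qed.

Definition stair n m : {set 'I_n * 'I_m} :=
  [set v : 'I_n * 'I_m |
    (v.1 < minn n m) && ((val v.2 == v.1) || (val v.2 == (v.1).+1 %% minn n m))].

Section Staircase.

Variables n m : nat.
Hypothesis k_ge2 : 2 <= minn n m.

Lemma card_row_stair i : #|row_set (stair n m) i| = if i < minn n m then 2 else 0.
Proof.
rewrite card_row_setE; case: ifP => i_lt_k.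
  apply: (@card_ord_seq _ _ [:: val i; i.+1 %% minn n m]) => [||j];
    rewrite /= ?inE ?i_lt_k ?andbT //= modn_succ //; case: ifP; lia.
by apply/eqP; rewrite cards_eq0; apply/eqP/setP => j; rewrite !inE i_lt_k.
Qed.

Lemma card_col_stair j : #|col_set (stair n m) j| = if j < minn n m then 2 else 0.
Proof.
rewrite card_col_setE; case: ifP => j_lt_k.
  apply: (@card_ord_seq _ _ [:: val j; if val j == 0 then (minn n m).-1 else j.-1]) => [||i].
  - by rewrite /= inE andbT; case: ifP; lia.
  - by rewrite /= andbT; case: ifP; lia.
  rewrite !inE /=; case: (ltnP i (minn n m)) => [i_lt_k | k_le_i] /=; last by case: ifP; lia.
  by rewrite modn_succ //; case: ifP; case: ifP; lia.
apply/eqP; rewrite cards_eq0; apply/eqP/setP => i; rewrite !inE.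
case: (ltnP i (minn n m)) => [i_lt_k | ] //=.
by rewrite modn_succ //; case: ifP; lia.
Qed.

Lemma stair_total2dom : total2dom (@KK_adj n m) (stair n m).
Proof.
apply/total2dom_KKP => -[i j]; rewrite card_row_stair card_col_stair inE /=.
by have := ltn_ord i; have := ltn_ord j; case: ifP; case: ifP; lia.
Qed.

Lemma card_stair : #|stair n m| = 2 * minn n m.
Proof.
rewrite card_rows (eq_bigr _ (fun i _ => card_row_stair i)).
by rewrite sum_ord_step ?geq_minl ?muln0 ?addn0.
Qed.

End Staircase.

Lemma gamma2t_KK_upper n m : 2 <= n -> 2 <= m -> gamma2t_KK n m <= 2 * minn n m.
Proof.
move=> n_ge2 m_ge2; have k_ge2 : 2 <= minn n m by rewrite leq_min n_ge2.
by rewrite -(card_stair k_ge2); apply/gamma2t_le_card/stair_total2dom.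
Qed.

(* Row i < x meets the set in the horizontal triple of columns y + 3i, y + 3i + 1,
   y + 3i + 2; column j < y meets it in the vertical triple of rows x + 3j,
   x + 3j + 1, x + 3j + 2. *)
Definition triples x y : {set 'I_(x + 3 * y) * 'I_(3 * x + y)} :=
  [set v : 'I_(x + 3 * y) * 'I_(3 * x + y) |
    ((v.1 < x) && (y <= v.2) && ((v.2 - y) %/ 3 == v.1)) ||
    ((v.2 < y) && (x <= v.1) && ((v.1 - x) %/ 3 == v.2))].

Section Triples.

Variables x y : nat.

Lemma card_row_triples i : #|row_set (triples x y) i| = if i < x then 3 else 1.
Proof.
have := ltn_ord i; rewrite card_row_setE; case: ifP => i_lt_x i_lt.
  apply: (@card_ord_seq _ _ [:: y + 3 * i; y + 3 * i + 1; y + 3 * i + 2]) => [||j];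
    rewrite /= ?inE /=; lia.
by apply: (@card_ord_seq _ _ [:: (i - x) %/ 3]) => [||j]; rewrite /= ?inE /=; lia.
Qed.

Lemma card_col_triples j : #|col_set (triples x y) j| = if j < y then 3 else 1.
Proof.
have := ltn_ord j; rewrite card_col_setE; case: ifP => j_lt_y j_lt.
  apply: (@card_ord_seq _ _ [:: x + 3 * j; x + 3 * j + 1; x + 3 * j + 2]) => [||i];
    rewrite /= ?inE /=; lia.
by apply: (@card_ord_seq _ _ [:: (j - y) %/ 3]) => [||i]; rewrite /= ?inE /=; lia.
Qed.

Lemma triples_total2dom : total2dom (@KK_adj _ _) (triples x y).
Proof.
apply/total2dom_KKP => -[i j]; rewrite card_row_triples card_col_triples inE /=.
by case: ifP; case: ifP; lia.
Qed.

Lemma card_triples : #|triples x y| = 3 * (x + y).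
Proof.
rewrite card_rows (eq_bigr _ (fun i _ => card_row_triples i)) sum_ord_step ?leq_addr //.
by rewrite addKn mulnDr mul1n mulnC.
Qed.

End Triples.

Lemma gamma2t_KK_triples x y : y <= x <= 3 * y ->
  gamma2t_KK (x + 3 * y) (3 * x + y) = 3 * (x + y).
Proof.
move=> /andP[y_le_x x_le_3y]; apply/eqP; rewrite eqn_leq.
rewrite -{1}(card_triples x y) gamma2t_le_card ?triples_total2dom //=.
elim/gamma2t_ind: (gamma2t_KK _ _) => [|S /card_total2dom_KK_cases]; last first.
  by move: #|S| => s; lia.
rewrite card_prod !card_ord; case: (posnP y) => [y0 | y_gt0]; last nia.
by move: x_le_3y; rewrite y0 leqn0 => /eqP ->.
Qed.

Local Open Scope R_scope.

Lemma ratio_bounds n m : (2 <= n)%N -> (2 <= m)%N -> 3 / 2 <= ratio n m <= 2.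
Proof.
move=> n_ge2 m_ge2; have k_ge2 : (2 <= minn n m)%N by rewrite leq_min n_ge2.
have /leP/le_INR := gamma2t_KK_lower n_ge2 m_ge2.
have /leP/le_INR := gamma2t_KK_upper n_ge2 m_ge2.
have /leP/le_INR := k_ge2.
rewrite /ratio !mult_INR /=; move: (INR (minn n m)) (INR (gamma2t_KK n m)) => k g k2 up lo.
have gk : g / k * k = g by field; lra.
by split; apply: (Rmult_le_reg_r k); rewrite ?gk; lra.
Qed.

Lemma ratio_triples x y : (0 < y <= x)%N -> (x <= 3 * y)%N ->
  ratio (x + 3 * y) (3 * x + y) = 3 * (INR x + INR y) / (INR x + 3 * INR y).
Proof.
move=> /andP[y_gt0 y_le_x] x_le_3y.
rewrite /ratio gamma2t_KK_triples ?y_le_x //.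
have -> : minn (x + 3 * y) (3 * x + y) = (x + 3 * y)%N by apply/minn_idPl; lia.
have /leP/lt_0_INR := y_gt0; rewrite -!multE -!plusE !mult_INR !plus_INR ?mult_INR /= => y_pos.
field; have := pos_INR x; lra.
Qed.

Lemma triples_ratio_near (c X Y : R) : 1 <= c -> 1 <= Y -> X <= c * Y < X + 1 ->
  Rabs (3 * (X + Y) / (X + 3 * Y) - 3 * (c + 1) / (c + 3)) < / Y.
Proof.
move=> c_ge1 Y_ge1 [X_le X_gt].
have D_ge : 12 * Y <= (X + 3 * Y) * (c + 3) by nra.
have -> : 3 * (X + Y) / (X + 3 * Y) - 3 * (c + 1) / (c + 3) =
          6 * (X - c * Y) * / ((X + 3 * Y) * (c + 3)) by field; nra.
have invD_pos : 0 < / ((X + 3 * Y) * (c + 3)) by apply: Rinv_0_lt_compat; lra.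
have invD_le : / ((X + 3 * Y) * (c + 3)) <= / 12 * / Y.
  by rewrite -Rinv_mult; apply: Rinv_le_contravar => //; lra.
have invY_pos : 0 < / Y by apply: Rinv_0_lt_compat; lra.
move: (/ ((X + 3 * Y) * (c + 3))) invD_pos invD_le => invD invD_pos invD_le.
have : 0 < (X - c * Y + 1) * invD by apply: Rmult_lt_0_compat; lra.
have : (X - c * Y) * invD <= 0 by nra.
move=> neg gt; apply: Rabs_def1; lra.
Qed.

Definition floor_nat (r : R) : nat := Z.to_nat (Int_part r).

Lemma floor_natP (r : R) : 0 <= r -> INR (floor_nat r) <= r < INR (floor_nat r) + 1.
Proof.
move=> r_ge0; have [Int_part_le Int_part_gt] := base_Int_part r.
have Int_part_ge0 : (-1 < Int_part r)%Z by apply: lt_IZR; lra.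
by rewrite /floor_nat INR_IZR_INZ Z2Nat.id; [lra | lia].
Qed.

Lemma floor_triple_bounds c k : 1 <= c <= 3 ->
  (k.+1 <= floor_nat (c * INR k.+1) <= 3 * k.+1)%N.
Proof.
move=> c_range; have k_pos := lt_0_INR _ (Nat.lt_0_succ k).
have [floor_le floor_gt] := floor_natP (r := c * INR k.+1) ltac:(nra).
apply/andP; split; apply/leP.
  apply: INR_lt; have := S_INR k; nra.
have INR3 : INR 3 = 3 by rewrite /=; lra.
by apply: INR_le; rewrite -multE mult_INR INR3; nra.
Qed.

Lemma cv_ratio_triples c : 1 <= c <= 3 ->
  Un_cv (fun k => ratio (floor_nat (c * INR k.+1) + 3 * k.+1)
                       (3 * floor_nat (c * INR k.+1) + k.+1))
        (3 * (c + 1) / (c + 3)).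
Proof.
move=> c_range eps eps_pos; have [N [N_lt N_pos]] := archimed_cor1 eps eps_pos.
exists N => k k_ge; have /andP[x_ge x_le] := floor_triple_bounds k c_range.
rewrite /R_dist ratio_triples ?x_ge ?x_le //.
have k_ge1 : 1 <= INR k.+1 by apply: (le_INR 1); lia.
apply: Rlt_trans (triples_ratio_near _ _ _) _ => //; first by lra.
  by have := floor_natP (r := c * INR k.+1) ltac:(nra); lra.
apply: Rle_lt_trans N_lt; apply: Rinv_le_contravar; first exact: lt_0_INR.
by apply: le_INR; lia.
Qed.

Lemma INR_3_2 : INR 3 / INR 2 = 3 / 2.
Proof. by rewrite /=; field. Qed.

Lemma INR_2 : INR 2 = 2.
Proof. by rewrite /=; lra. Qed.

Lemma liminf_ratio : liminf2_is ratio (INR 3 / INR 2).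
Proof.
rewrite INR_3_2; split=> [eps eps_pos | eps eps_pos N].
  by exists 2%N => n m /leP n_ge2 /leP m_ge2; have := ratio_bounds n_ge2 m_ge2; lra.
exists (N.+1 + 3 * N.+1)%N, (3 * N.+1 + N.+1)%N; do 2 (split; first lia).
rewrite ratio_triples; [|lia..]; have : 0 < INR N.+1 by apply: lt_0_INR; lia.
move: (INR N.+1) => Y Y_pos.
by rewrite (_ : 3 * (Y + Y) / (Y + 3 * Y) = 3 / 2); [lra | field; lra].
Qed.

Lemma limsup_ratio : limsup2_is ratio (INR 2).
Proof.
rewrite INR_2; split=> [eps eps_pos | eps eps_pos N].
  by exists 2%N => n m /leP n_ge2 /leP m_ge2; have := ratio_bounds n_ge2 m_ge2; lra.
exists (3 * N.+1 + 3 * N.+1)%N, (3 * (3 * N.+1) + N.+1)%N; do 2 (split; first lia).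
rewrite ratio_triples; [|lia..]; rewrite -multE mult_INR.
have : 0 < INR N.+1 by apply: lt_0_INR; lia.
move: (INR N.+1) => Y Y_pos.
by rewrite (_ : 3 * (INR 3 * Y + Y) / (INR 3 * Y + 3 * Y) = 2); [lra | rewrite /=; field; lra].
Qed.

Lemma ratio_limit_points alpha : INR 3 / INR 2 <= alpha -> alpha <= INR 2 ->
  exists nk mk : nat -> nat,
    (forall k, (2 <= nk k)%N /\ (2 <= mk k)%N) /\ Un_cv (fun k => ratio (nk k) (mk k)) alpha.
Proof.
rewrite INR_3_2 INR_2 => alpha_ge alpha_le; set c := (3 * alpha - 3) / (3 - alpha).
have c_alpha : c * (3 - alpha) = 3 * alpha - 3 by rewrite /c; field; lra.
have c_range : 1 <= c <= 3 by split; nra.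
exists (fun k => floor_nat (c * INR k.+1) + 3 * k.+1)%N.
exists (fun k => 3 * floor_nat (c * INR k.+1) + k.+1)%N.
split; first by move=> k; have := floor_triple_bounds k c_range; lia.
rewrite (_ : alpha = 3 * (c + 1) / (c + 3)); first exact: cv_ratio_triples.
apply: (Rmult_eq_reg_r (c + 3)); last lra.
by rewrite /Rdiv Rmult_assoc Rinv_l; lra.
Qed.

Local Close Scope R_scope.

Theorem theorem18 :
  liminf2_is ratio (Rdiv (INR 3) (INR 2)) /\
  limsup2_is ratio (INR 2) /\
  (forall alpha : R, Rle (Rdiv (INR 3) (INR 2)) alpha -> Rle alpha (INR 2) ->
     exists nk mk : nat -> nat,
       (forall k : nat, 2 <= nk k /\ 2 <= mk k) /\
       Un_cv (fun k : nat => ratio (nk k) (mk k)) alpha).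
Proof. exact: (conj liminf_ratio (conj limsup_ratio ratio_limit_points)). Qed.
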